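(* Let $n\geq 4$ and let $P$ be a convex $n$-gon with vertices labelled $0,1,\dots,n-1$ in cyclic order (indices taken modulo $n$). Let $a$ be a fixed vertex of $P$ and let $m$ be an integer with $0\leq m\leq n-3$. Then the number of triangulations of $P$ that use none of the $m$ diagonals $a(a+2), a(a+3),\dots, a(a+m+1)$ is \[\sum_{i=0}^{n-3-m} C_i C_{n-3-i},\] where $C_k=\frac{1}{k+1}\binom{2k}{k}$ is the $k$th Catalan number.
   Context: A triangulation of a convex polygon uses non-crossing diagonals to divide it into triangles. *)

From mathcomp Require Import all_boot.
Set Implicit Arguments. Unset Strict Implicit. Unset Printing Implicit Defensive.

(* A diagonal is stored as an ordered pair (i, j) with i < j, the two
   vertices not cyclically adjacent (j - i >= 2 and not {0, n-1}). *)
Definition is_diag (n : nat) (d : 'I_n * 'I_n) : bool :=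
  [&& (d.1 : nat) < d.2, (d.1 : nat).+1 < d.2 & ~~ (((d.1 : nat) == 0) && ((d.2 : nat) == n.-1))].

(* Two diagonals cross (in their interiors) iff their endpoints interleave
   strictly around the polygon. *)
Definition crossing (n : nat) (d e : 'I_n * 'I_n) : bool :=
  ((d.1 < e.1 < d.2) && (d.2 < e.2)) || ((e.1 < d.1 < e.2) && (e.2 < d.2)).

Definition triangulation (n : nat) (T : {set 'I_n * 'I_n}) : bool :=
  [&& [forall d in T, is_diag d],
      [forall d in T, forall e in T, ~~ crossing d e]
    & [forall d, (is_diag d && (d \notin T)) ==> [exists e in T, crossing d e]]].

Definition has_diag (n : nat) (T : {set 'I_n * 'I_n}) (u v : nat) : bool :=
  [exists d in T, (((d.1 : nat) == u) && ((d.2 : nat) == v))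
                  || (((d.1 : nat) == v) && ((d.2 : nat) == u))].

Definition catalan (k : nat) : nat := 'C(k.*2, k) %/ k.+1.

(* Every triangulation of the subpolygon on the vertices p, ..., q contains a
   unique triangle on the side [p q]; its apex j splits the triangulation into
   triangulations of p..j and j..q, so these are counted by the Catalan numbers
   through Segner's recurrence C_(k+1) = sum_i C_i C_(k-i), which we derive from
   the closed form by comparing coefficients of powers of the truncated
   generating series.  Rotating the polygon by one step injects triangulations
   avoiding the fan of diagonals at a into those avoiding the fan at a + 1;
   going once around the polygon makes all these counts equal, so we may take
   a = n - 1.  There the diagonals from n - 1 to 1, ..., m are all absent
   exactly when the apex j of the triangle on the side [0 (n - 1)] exceeds m,
   which gives sum_(m < j < n - 1) C_(j - 1) C_(n - 2 - j). *)

From mathcomp Require Import all_boot all_algebra zify ring.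
Set Implicit Arguments. Unset Strict Implicit. Unset Printing Implicit Defensive.
Import GRing.Theory.

Definition binm (N k : nat) : nat := if k is k'.+1 then 'C(N, k') else 0.

(* The k-th coefficient of the s-th power of the Catalan generating series,
   in ballot-number form; for [s = k = 0] the truncated subtraction still
   gives the correct value 1. *)
Definition catalan_conv (s k : nat) : int :=
  ('C(k.*2 + s - 1, k))%:Z - (binm (k.*2 + s - 1) k)%:Z.

Lemma binmS N k : 'C(N.+1, k) = binm N k + 'C(N, k).
Proof. by case: k => [|k] /=; rewrite ?bin0 // binS addnC. Qed.

Lemma catalan_conv_s0 s : catalan_conv s 0 = 1.
Proof. by rewrite /catalan_conv bin0. Qed.

Lemma catalan_conv0S k : catalan_conv 0 k.+1 = 0.
Proof.
have sym : 'C(k.*2.+1, k.+1) = 'C(k.*2.+1, k).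
  by rewrite -[in LHS](_ : k.*2.+1 - k = k.+1) ?bin_sub //; lia.
by rewrite /catalan_conv /= addn0 doubleS subSS subn0 sym subrr.
Qed.

Lemma catalan_convSS s k :
  catalan_conv s.+1 k.+1 = (catalan_conv s k.+1 + catalan_conv s.+2 k)%R.
Proof.
rewrite /catalan_conv; set N := k.*2 + s.
have -> : k.+1.*2 + s.+1 - 1 = N.+2 by rewrite /N; lia.
have -> : k.+1.*2 + s - 1 = N.+1 by rewrite /N; lia.
have -> : k.*2 + s.+2 - 1 = N.+1 by rewrite /N; lia.
rewrite /= (binS N.+1) (binmS N.+1 k); lia.
Qed.

Lemma catalan_conv1 k : catalan_conv 1 k = Posz (catalan k).
Proof.
rewrite /catalan_conv addn1 subn1 /=.
case: k => [|k]; first by rewrite /catalan bin0 divn1.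
have ballot : k.+1 * 'C(k.+1.*2, k.+1) = k.+2 * 'C(k.+1.*2, k).
  by rewrite mul_bin_left (_ : k.+1.*2 - k = k.+2) //; lia.
have le_mid : 'C(k.+1.*2, k) <= 'C(k.+1.*2, k.+1) by nia.
have E : 'C(k.+1.*2, k.+1) = k.+2 * ('C(k.+1.*2, k.+1) - 'C(k.+1.*2, k)).
  by rewrite mulnBr -ballot; lia.
rewrite /catalan [in RHS]E mulKn //=; lia.
Qed.

Section SegnerStep.
Local Open Scope ring_scope.
Variable K : nat.
Hypothesis catalanS_lt : forall k, (k < K)%N ->
  catalan k.+1 = (\sum_(i < k.+1) catalan i * catalan (k - i))%N.

(* The Catalan generating series truncated at degree K: it satisfies
   P = 1 + 'X * P^2 up to degree K. *)
Let P : {poly int} := \poly_(i < K.+1) (catalan i)%:R.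

Let coefP i : (i <= K)%N -> P`_i = (catalan i)%:R.
Proof. by move=> le_iK; rewrite coef_poly ltnS le_iK. Qed.

Let coefP_sqr i : (i <= K)%N ->
  (P ^+ 2)`_i = (\sum_(j < i.+1) catalan j * catalan (i - j))%N%:R.
Proof.
move=> le_iK; rewrite expr2 coefM natr_sum; apply: eq_bigr => j _.
by rewrite natrM !coefP //; have := ltn_ord j; lia.
Qed.

Let coef_catalan_eqn i : (i <= K)%N -> (P - 1 - 'X * P ^+ 2)`_i = 0.
Proof.
move=> le_iK; rewrite !coefB coefXM coef1 coefP //.
case: i le_iK => [|i] le_iK /=; first by rewrite /catalan subr0 subrr.
by rewrite catalanS_lt // coefP_sqr 1?ltnW // !subr0 subrr.
Qed.

Let coefP_exp s k : (k <= K)%N -> (P ^+ s)`_k = catalan_conv s k.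
Proof.
elim: k s => [|k IHk] s le_kK.
  rewrite catalan_conv_s0; elim: s => [|s IHs]; first by rewrite coef1.
  by rewrite exprS coef0M IHs mulr1 coefP // /catalan bin0 divn1.
elim: s => [|s IHs]; first by rewrite coef1 catalan_conv0S.
have -> : P ^+ s.+1 = P ^+ s + 'X * P ^+ s.+2 + P ^+ s * (P - 1 - 'X * P ^+ 2).
  by rewrite !exprS expr0; move: (P ^+ s) 'X => Q X; ring.
rewrite !coefD coefXM /= IHs IHk 1?ltnW // catalan_convSS.
rewrite coefM big1 ?addr0 // => j _.
by rewrite coef_catalan_eqn ?mulr0 //; have := ltn_ord j; lia.
Qed.

Lemma catalan_segner_step :
  catalan K.+1 = (\sum_(i < K.+1) catalan i * catalan (K - i))%N.
Proof.
(* At [s = 0] the Pascal-type recurrence reads C_(K+1) = 0 + [x^K] P^2. *)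
have := catalan_convSS 0 K.
rewrite catalan_conv1 catalan_conv0S add0r -coefP_exp // coefP_sqr // natz.
by case.
Qed.
End SegnerStep.

Lemma catalanS k : catalan k.+1 = \sum_(i < k.+1) catalan i * catalan (k - i).
Proof. by elim/ltn_ind: k => k IH; apply: catalan_segner_step. Qed.

(* [lia] does not see through the projections of a pair of ordinals that is
   not syntactically a pair, so such variables are destructed first. *)
Ltac lia_pairs :=
  repeat match goal with x : ?T |- _ =>
    let T' := eval hnf in T in lazymatch T' with prod _ _ => destruct x end end;
  cbn [fst snd] in *; lia.

Lemma card_partition_nat (X : finType) (A : {set X}) (r : seq nat)
    (P : nat -> pred X) :
  uniq r ->
  (forall x, x \in A -> exists2 j, j \in r & P j x) ->
  (forall x j j', x \in A -> j \in r -> j' \in r -> P j x -> P j' x -> j = j') ->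
  #|A| = \sum_(j <- r) #|[set x in A | P j x]|.
Proof.
move=> r_uniq P_ex P_uniq.
rewrite -sum1_card big_mkcond.
under [RHS]eq_bigr => j _ do rewrite -sum1_card big_mkcond.
rewrite exchange_big /=; apply: eq_bigr => x _.
have [xA|xNA] := boolP (x \in A); last by rewrite big1 // => j _; rewrite inE (negbTE xNA).
have [j0 j0r Pj0] := P_ex x xA.
rewrite (bigD1_seq j0) //= inE xA Pj0 big1_seq ?addn0 // => j /andP[j_neq jr].
rewrite inE xA /=; case: ifP => // Pj.
by rewrite (P_uniq x j j0 xA jr j0r Pj Pj0) eqxx in j_neq.
Qed.

Section SubPolygon.
Variable n : nat.
Implicit Types (T : {set 'I_n * 'I_n}) (d e : 'I_n * 'I_n) (p q j : nat).

Definition subdiag p q d : bool :=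
  [&& p <= d.1, (d.1 : nat).+1 < d.2, d.2 <= q
    & ~~ (((d.1 : nat) == p) && ((d.2 : nat) == q))].

Definition subtriangulation p q T : bool :=
  [&& [forall d in T, subdiag p q d],
      [forall d in T, forall e in T, ~~ crossing d e]
    & [forall d, (subdiag p q d && (d \notin T)) ==> [exists e in T, crossing d e]]].

Definition chord T (x y : nat) : bool :=
  [exists d in T, ((d.1 : nat) == x) && ((d.2 : nat) == y)].

Definition side T (x y : nat) : bool := (x.+1 == y) || chord T x y.

Definition apex p q j T : bool :=
  [&& subtriangulation p q T, side T p j & side T j q].

Lemma subtriangulationP p q T :
  reflect [/\ forall d, d \in T -> subdiag p q d,
              forall d e, d \in T -> e \in T -> ~~ crossing d e &
              forall d, subdiag p q d -> d \notin T ->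
                exists2 e, e \in T & crossing d e]
          (subtriangulation p q T).
Proof.
apply: (iffP and3P) => [[/forall_inP diagT /forall_inP noncross /forallP maxT]
                       | [diagT noncross maxT]]; split.
- exact: diagT.
- by move=> d e dT eT; apply: (forall_inP (noncross d dT)).
- move=> d dd dT; have := maxT d; rewrite dd dT /= => /exists_inP[e eT de].
  by exists e.
- exact/forall_inP.
- by apply/forall_inP => d dT; apply/forall_inP => e eT; apply: noncross.
- apply/forallP => d; apply/implyP => /andP[dd dT].
  by have [e eT de] := maxT d dd dT; apply/exists_inP; exists e.
Qed.

Lemma chordP T x y :
  reflect (exists2 d, d \in T & (d.1 : nat) = x /\ (d.2 : nat) = y) (chord T x y).
Proof.
apply: (iffP exists_inP) => [[d dT /andP[/eqP <- /eqP <-]] | [d dT [<- <-]]];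
  by exists d; rewrite ?eqxx.
Qed.

Lemma chord_mem T d : d \in T -> chord T d.1 d.2.
Proof. by move=> dT; apply/chordP; exists d. Qed.

Lemma pair_val_inj d e : (d.1 : nat) = e.1 -> (d.2 : nat) = e.2 -> d = e.
Proof. by case: d e => [d1 d2] [e1 e2] /= /val_inj -> /val_inj ->. Qed.

Lemma card_subtriangulation_small p q :
  q <= p.+1 -> #|[set T | subtriangulation p q T]| = 1.
Proof.
move=> le_qp; rewrite -(cards1 (set0 : {set 'I_n * 'I_n})); apply: eq_card => T.
rewrite !inE.
apply/subtriangulationP/eqP => [[diagT _ _] | ->]; last first.
  split=> [d|d e|d]; rewrite ?inE // /subdiag => dd; exfalso; move: dd; lia_pairs.
apply/setP => d; rewrite inE; apply/negP => /diagT; rewrite /subdiag; lia_pairs.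
Qed.

Lemma apex_exists p q T : p.+1 < q -> q < n -> subtriangulation p q T ->
  exists2 j, p < j < q & apex p q j T.
Proof.
move=> lt_pq lt_qn triT; have [diagT noncross maxT] := subtriangulationP _ _ _ triT.
pose P j := (p < j < q) && side T p j.
have P_ex : exists j, P j by exists p.+1; rewrite /P /side eqxx; lia.
have P_ub j : P j -> j <= q by case/andP; lia.
have [J /andP[J_mid pJ] J_max] := ex_maxnP P_ex P_ub.
exists J; rewrite // /apex triT pJ /side.
have [//|Jq_nedge /=] := eqVneq J.+1 q.
apply: contraT => Jq_nchord.
have lt_Jn : J < n by lia.
pose d0 : 'I_n * 'I_n := (Ordinal lt_Jn, Ordinal lt_qn).
have d0_diag : subdiag p q d0 by rewrite /subdiag /=; lia.
have d0_nT : d0 \notin T by apply: contra Jq_nchord => /chord_mem.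
have [e eT] := maxT d0 d0_diag d0_nT; rewrite /crossing /=.
have := diagT e eT; rewrite /subdiag => e_diag cross_e.
have [e1p|e1p] := eqVneq (e.1 : nat) p.
- have : P e.2 by rewrite /P /side -e1p chord_mem ?orbT //; lia_pairs.
  move/J_max; lia_pairs.
- case/orP: pJ => [/eqP pJ|/chordP[f fT [f1 f2]]]; first by lia_pairs.
  have := noncross f e fT eT; rewrite /crossing f1 f2; lia_pairs.
Qed.

Lemma apex_unique p q j j' T : p < j < q -> p < j' < q ->
  apex p q j T -> apex p q j' T -> j = j'.
Proof.
wlog lt_jj' : j j' / j < j'.
  move=> W j_mid j'_mid aj aj'; case: (ltngtP j j') => [lt|lt|//].
    exact: W.
  by symmetry; apply: W.
move=> j_mid j'_mid /and3P[triT _ jq] /and3P[_ pj' _].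
have [_ noncross _] := subtriangulationP _ _ _ triT.
case/orP: jq => [/eqP|/chordP[f fT [f1 f2]]]; first by lia.
case/orP: pj' => [/eqP|/chordP[g gT [g1 g2]]]; first by lia.
by have := noncross f g fT gT; rewrite /crossing f1 f2 g1 g2; lia.
Qed.

Lemma card_subtriangulation_apex p q (C : pred {set 'I_n * 'I_n}) :
  p.+1 < q -> q < n ->
  #|[set T | subtriangulation p q T && C T]| =
  \sum_(p.+1 <= j < q) #|[set T | apex p q j T && C T]|.
Proof.
move=> lt_pq lt_qn; rewrite (card_partition_nat (r := index_iota p.+1 q) (P := fun j T => apex p q j T)).
- apply: eq_bigr => j _; apply: eq_card => T; rewrite !inE /apex.
  by case: subtriangulation; case: (C T); rewrite ?andbT ?andbF.
- exact: iota_uniq.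
- move=> T; rewrite inE => /andP[triT _].
  by have [j j_mid aj] := apex_exists lt_pq lt_qn triT; exists j; rewrite // mem_index_iota.
- by move=> T j j' _; rewrite !mem_index_iota; apply: apex_unique.
Qed.

Definition apex_sides p q j : {set 'I_n * 'I_n} :=
  [set d | subdiag p q d && ((((d.1 : nat) == p) && ((d.2 : nat) == j))
                             || (((d.1 : nat) == j) && ((d.2 : nat) == q)))].

Definition glue p q j (X : {set 'I_n * 'I_n} * {set 'I_n * 'I_n}) :=
  X.1 :|: X.2 :|: apex_sides p q j.

Definition split_at p q j T :=
  (T :&: [set d | subdiag p j d], T :&: [set d | subdiag j q d]).

Lemma glueK p q j X : p < j < q ->
  subtriangulation p j X.1 -> subtriangulation j q X.2 ->
  split_at p q j (glue p q j X) = X.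
Proof.
case: X => [T1 T2] j_mid /subtriangulationP[diag1 _ _] /subtriangulationP[diag2 _ _].
congr pair; apply/setP => d; rewrite !inE.
- case T1d: (d \in T1); first by rewrite diag1.
  case T2d: (d \in T2) => /=; last by apply/negbTE; rewrite /subdiag; lia_pairs.
  by apply/negbTE; have := diag2 d T2d; rewrite /subdiag; lia_pairs.
- case T2d: (d \in T2); first by rewrite orbT diag2.
  case T1d: (d \in T1) => /=; last by apply/negbTE; rewrite /subdiag; lia_pairs.
  by apply/negbTE; have := diag1 d T1d; rewrite /subdiag; lia_pairs.
Qed.

Lemma glue_apex p q j X : p < j < q -> q < n ->
  subtriangulation p j X.1 -> subtriangulation j q X.2 -> apex p q j (glue p q j X).
Proof.
case: X => [T1 T2] j_mid lt_qn /subtriangulationP[diag1 noncross1 max1]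
  /subtriangulationP[diag2 noncross2 max2] /=.
have lt_jn : j < n by lia.
have lt_pn : p < n by lia.
apply/and3P; split.
- apply/subtriangulationP; split.
  + move=> d; rewrite !inE -!orbA => /or3P[/diag1|/diag2|/andP[]//];
      rewrite /subdiag; lia_pairs.
  + move=> d e; rewrite !inE -!orbA => /or3P[dT|dT|dT] /or3P[eT|eT|eT];
    first [ by apply: noncross1 | by apply: noncross2 | idtac ];
    try move: (diag1 _ dT); try move: (diag2 _ dT);
    try move: (diag1 _ eT); try move: (diag2 _ eT);
    rewrite /subdiag /crossing; lia_pairs.
  + move=> d dd; rewrite !inE -!orbA => /norP[dT1 /norP[dT2 dS]].
    have [le_d2j|lt_jd2] := leqP (d.2 : nat) j.
      have dd1 : subdiag p j d by move: dS dd; rewrite /subdiag; lia_pairs.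
      by have [e eT de] := max1 d dd1 dT1; exists e; rewrite // !inE eT.
    have [le_jd1|lt_d1j] := leqP j (d.1 : nat).
      have dd2 : subdiag j q d by move: dS dd; rewrite /subdiag; lia_pairs.
      by have [e eT de] := max2 d dd2 dT2; exists e; rewrite // !inE eT orbT.
    (* [d] straddles [j]: it crosses whichever of the sides [p j], [j q]
       does not share its endpoint. *)
    have [d1p|d1p] := eqVneq (d.1 : nat) p.
    * exists (Ordinal lt_jn, Ordinal lt_qn);
        by rewrite ?inE /subdiag /crossing /=; move: dd; rewrite /subdiag; lia_pairs.
    * exists (Ordinal lt_pn, Ordinal lt_jn);
        by rewrite ?inE /subdiag /crossing /=; move: dd; rewrite /subdiag; lia_pairs.
- rewrite /side; case: eqP => //= pj; apply/chordP.
  by exists (Ordinal lt_pn, Ordinal lt_jn); rewrite // !inE /subdiag /= !eqxx; lia.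
- rewrite /side; case: eqP => //= jq; apply/chordP.
  by exists (Ordinal lt_jn, Ordinal lt_qn); rewrite // !inE /subdiag /= !eqxx orbT; lia.
Qed.

Lemma subtriangulation_restrict p q r s T : p <= r -> s <= q ->
  subtriangulation p q T ->
  (forall e, e \in T -> [|| e.2 <= r, s <= e.1 | (r <= e.1) && (e.2 <= s)]) ->
  subtriangulation r s (T :&: [set d | subdiag r s d]).
Proof.
move=> le_pr le_sq /subtriangulationP[diagT noncross maxT] inside.
apply/subtriangulationP; split=> [d|d e|d dd].
- by rewrite !inE => /andP[].
- by rewrite !inE => /andP[dT _] /andP[eT _]; apply: noncross.
- rewrite !inE dd andbT => dT.
  have ddpq : subdiag p q d by move: dd; rewrite /subdiag; lia_pairs.
  have [e eT de] := maxT d ddpq dT; exists e; rewrite // !inE eT /=.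
  by move: (inside e eT) (diagT e eT) de dd; rewrite /subdiag /crossing; lia_pairs.
Qed.

Lemma split_atK p q j T : p < j < q -> apex p q j T ->
  [/\ subtriangulation p j (split_at p q j T).1,
      subtriangulation j q (split_at p q j T).2
    & glue p q j (split_at p q j T) = T].
Proof.
move=> j_mid /and3P[triT pj jq]; have [diagT noncross maxT] := subtriangulationP _ _ _ triT.
(* No diagonal of [T] straddles [j], since it would cross a side [p j] or [j q]. *)
have diag_side d : d \in T -> (d.2 <= j) || (j <= d.1).
  move=> dT; have := diagT d dT; rewrite /subdiag => dd.
  apply: contraT; rewrite negb_or -!ltnNge => /andP[lt_jd2 lt_d1j].
  have [d1p|d1p] := eqVneq (d.1 : nat) p.
  - case/orP: jq => [/eqP|/chordP[f fT [f1 f2]]]; first by lia_pairs.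
    by have := noncross d f dT fT; rewrite /crossing f1 f2; lia_pairs.
  - case/orP: pj => [/eqP|/chordP[f fT [f1 f2]]]; first by lia_pairs.
    by have := noncross d f dT fT; rewrite /crossing f1 f2; lia_pairs.
have sidesT d : d \in apex_sides p q j -> d \in T.
  rewrite inE => /andP[dd /orP[]/andP[/eqP d1 /eqP d2]].
  - case/orP: pj => [/eqP|/chordP[f fT [f1 f2]]]; first by move: dd; rewrite /subdiag; lia_pairs.
    by rewrite -(@pair_val_inj f d) // ?f1 ?f2 ?d1 ?d2.
  - case/orP: jq => [/eqP|/chordP[f fT [f1 f2]]]; first by move: dd; rewrite /subdiag; lia_pairs.
    by rewrite -(@pair_val_inj f d) // ?f1 ?f2 ?d1 ?d2.
split.
- apply: subtriangulation_restrict triT _ => [||e eT]; try lia.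
  by move: (diag_side e eT) (diagT e eT); rewrite /subdiag; lia_pairs.
- apply: subtriangulation_restrict triT _ => [||e eT]; try lia.
  by move: (diag_side e eT) (diagT e eT); rewrite /subdiag; lia_pairs.
- apply/setP => d; rewrite /glue !inE /=; case dT: (d \in T) => /=.
  + by move: (diag_side d dT) (diagT d dT); rewrite /subdiag; lia_pairs.
  + by apply: contraFF dT => dS; apply: sidesT; rewrite inE.
Qed.

Lemma card_apex p q j : p < j < q -> q < n ->
  #|[set T | apex p q j T]| =
  #|[set T | subtriangulation p j T]| * #|[set T | subtriangulation j q T]|.
Proof.
move=> j_mid lt_qn; rewrite -cardsX.
have glue_inj : {in setX [set T | subtriangulation p j T] [set T | subtriangulation j q T] &,
                 injective (glue p q j)}.
  move=> X Y; rewrite !inE => /andP[X1 X2] /andP[Y1 Y2] XY.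
  by rewrite -(glueK j_mid X1 X2) -(glueK j_mid Y1 Y2) XY.
rewrite -(card_in_imset glue_inj); apply: eq_card => T; rewrite inE.
apply/idP/imsetP => [aT | [X]].
- have [T1 T2 TK] := split_atK j_mid aT.
  by exists (split_at p q j T); rewrite // !inE T1 T2.
- by rewrite !inE => /andP[X1 X2] ->; apply: glue_apex.
Qed.

Lemma card_subtriangulation p q : q < n ->
  #|[set T | subtriangulation p q T]| = catalan (q - p - 1).
Proof.
have [k] := ubnP (q - p); elim: k p q => // k IHk p q lt_qp_k lt_qn.
have [le_qp|lt_pq] := leqP q p.+1.
  by rewrite card_subtriangulation_small // (_ : q - p - 1 = 0) //; lia.
have card_andbT A : #|[set T | A T && xpredT T]| = #|[set T | A T]|.
  by apply: eq_card => T; rewrite !inE andbT.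
have -> : q - p - 1 = (q - p - 2).+1 by lia.
rewrite -card_andbT card_subtriangulation_apex // catalanS.
rewrite -{1}(add0n p.+1) big_addn big_mkord (_ : q - p.+1 = (q - p - 2).+1); last by lia.
apply: eq_bigr => i _; have := ltn_ord i => lt_i.
rewrite card_andbT card_apex ?IHk; try lia.
by congr (catalan _ * catalan _); lia.
Qed.

End SubPolygon.

Section Polygon.
Variable n : nat.
Implicit Types (T : {set 'I_n * 'I_n}) (d e : 'I_n * 'I_n).

Lemma is_diag_ltn d : is_diag d -> (d.1 : nat) < d.2.
Proof. by rewrite /is_diag; lia_pairs. Qed.

Lemma is_diag_subdiag d : is_diag d = subdiag 0 n.-1 d.
Proof. by rewrite /is_diag /subdiag; have := ltn_ord d.2; lia. Qed.

Lemma triangulation_subtriangulation T :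
  triangulation T = subtriangulation 0 n.-1 T.
Proof.
by rewrite /triangulation /subtriangulation; congr [&& _, _ & _];
  apply: eq_forallb => d; rewrite is_diag_subdiag.
Qed.

Lemma triangulationP T :
  reflect [/\ forall d, d \in T -> is_diag d,
              forall d e, d \in T -> e \in T -> ~~ crossing d e &
              forall d, is_diag d -> d \notin T -> exists2 e, e \in T & crossing d e]
          (triangulation T).
Proof.
rewrite triangulation_subtriangulation.
apply: (iffP (subtriangulationP _ _ _)) => -[diagT noncross maxT]; split=> // d.
- by rewrite is_diag_subdiag; apply: diagT.
- by rewrite is_diag_subdiag; apply: maxT.
- by rewrite -is_diag_subdiag; apply: diagT.
- by rewrite -is_diag_subdiag; apply: maxT.
Qed.

Definition fan_free m (b : nat) T : bool :=
  [forall k : 'I_m, ~~ has_diag T b ((b + (k + 2)) %% n)].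

(* With [b = n - 1] the forbidden diagonals are those from [n - 1] to [1..m]. *)
Lemma fan_free_last_apex m j T : m <= n - 3 -> 0 < j < n.-1 ->
  apex 0 n.-1 j T -> fan_free m n.-1 T = (m < j).
Proof.
move=> le_mn j_mid /and3P[triT side0j sidejn].
have [diagT noncross _] := subtriangulationP _ _ _ triT.
have has_diag_last (k : 'I_m) : has_diag T n.-1 ((n.-1 + (k + 2)) %% n) = chord T k.+1 n.-1.
  have := ltn_ord k => lt_km.
  rewrite (_ : n.-1 + (k + 2) = k.+1 + n) ?modnDr ?modn_small; try lia.
  apply/existsP/chordP => [[d /andP[dT /orP[]/andP[/eqP d1 /eqP d2]]] | [d dT [d1 d2]]].
  - by have := diagT d dT; rewrite /subdiag; lia_pairs.
  - by exists d.
  - by exists d; rewrite dT d1 d2 !eqxx orbT.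
apply/forallP/idP => [fan | lt_mj k].
- rewrite ltnNge; apply/negP => le_jm.
  case/orP: sidejn => [/eqP|jn]; first by lia.
  have lt_j1m : j.-1 < m by lia.
  by have := fan (Ordinal lt_j1m); rewrite has_diag_last /= prednK ?jn //; lia.
- rewrite has_diag_last; apply/negP => /chordP[f fT [f1 f2]].
  have := ltn_ord k => lt_km.
  case/orP: side0j => [/eqP|/chordP[g gT [g1 g2]]]; first by lia.
  by have := noncross g f gT fT; rewrite /crossing f1 f2 g1 g2; lia.
Qed.

Lemma card_fan_free_last m : 4 <= n -> m <= n - 3 ->
  #|[set T | triangulation T && fan_free m n.-1 T]|
  = \sum_(i < (n - 3 - m).+1) catalan i * catalan (n - 3 - i).
Proof.
move=> le4n le_mn.
rewrite (eq_card (B := [set T | subtriangulation 0 n.-1 T && fan_free m n.-1 T]));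
  last by move=> T; rewrite !inE triangulation_subtriangulation.
rewrite card_subtriangulation_apex; try lia.
rewrite (big_cat_nat (n := m.+1)) /=; try lia.
rewrite big_nat big1 ?add0n => [|j j_mid]; last first.
  apply/eqP; rewrite cards_eq0; apply/eqP/setP => T; rewrite !inE.
  by apply/negP => /andP[aT]; rewrite (fan_free_last_apex le_mn _ aT); lia.
rewrite (eq_big_nat _ _ (F2 := fun j => catalan (j - 1) * catalan (n.-1 - j - 1)))
  => [|j j_mid]; last first.
  rewrite (eq_card (B := [set T | apex 0 n.-1 j T])) => [|T].
    by rewrite card_apex ?card_subtriangulation ?subn0 //; lia.
  rewrite !inE; case aT: (apex _ _ _ _) => //=.
  by rewrite (fan_free_last_apex le_mn _ aT); lia.
rewrite -{1}(add0n m.+1) big_addn big_mkord (_ : n.-1 - m.+1 = (n - 3 - m).+1); last by lia.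
rewrite (reindex_inj rev_ord_inj) /=; apply: eq_bigr => i _; have := ltn_ord i => lt_i.
by rewrite mulnC; congr (catalan _ * catalan _); lia.
Qed.

Lemma modnS_small x : x < n -> x.+1 %% n = if x.+1 == n then 0 else x.+1.
Proof. by move=> lt_xn; case: eqP => [->|x1n]; rewrite ?modnn // modn_small; lia. Qed.

Lemma val_ordS (x : 'I_n) : (ordS x : nat) = if (x : nat).+1 == n then 0 else x.+1.
Proof. exact: modnS_small. Qed.

(* Rotation of the polygon by one step, [i |-> i + 1 (mod n)], acting on
   diagonals stored with increasing endpoints. *)
Definition rot_diag d : 'I_n * 'I_n :=
  if (d.2 : nat) == n.-1 then (ordS d.2, ordS d.1) else (ordS d.1, ordS d.2).

Lemma rot_diagE d : (d.1 : nat) < d.2 ->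
  ((d.2 : nat) = n.-1 /\ ((rot_diag d).1 : nat) = 0 /\ ((rot_diag d).2 : nat) = d.1.+1) \/
  ((d.2 : nat).+1 < n /\ ((rot_diag d).1 : nat) = d.1.+1 /\ ((rot_diag d).2 : nat) = d.2.+1).
Proof.
move=> lt_d12; have := ltn_ord d.2; rewrite /rot_diag.
by case: eqP => d2; cbn [fst snd]; rewrite !val_ordS; repeat case: eqP; lia_pairs.
Qed.

Lemma rot_is_diag d : is_diag d -> is_diag (rot_diag d).
Proof.
move=> dd; have lt_d12 := is_diag_ltn dd.
have := ltn_ord d.2; move: dd; rewrite /is_diag.
by case: (rot_diagE lt_d12) => [[? [-> ->]] | [? [-> ->]]]; lia_pairs.
Qed.

Lemma crossing_rot d e : is_diag d -> is_diag e ->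
  crossing (rot_diag d) (rot_diag e) = crossing d e.
Proof.
move=> dd ed; have lt_d12 := is_diag_ltn dd; have lt_e12 := is_diag_ltn ed.
have := ltn_ord d.2; have := ltn_ord e.2; rewrite /crossing.
case: (rot_diagE lt_d12) => [[? [-> ->]] | [? [-> ->]]];
  case: (rot_diagE lt_e12) => [[? [-> ->]] | [? [-> ->]]];
  move: dd ed; rewrite /is_diag; lia_pairs.
Qed.

Lemma rot_diag_inj d e : is_diag d -> is_diag e -> rot_diag d = rot_diag e -> d = e.
Proof.
move=> dd ed de; have lt_d12 := is_diag_ltn dd; have lt_e12 := is_diag_ltn ed.
have de1 : ((rot_diag d).1 : nat) = (rot_diag e).1 by rewrite de.
have de2 : ((rot_diag d).2 : nat) = (rot_diag e).2 by rewrite de.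
apply: pair_val_inj; move: de1 de2 (ltn_ord d.2) (ltn_ord e.2);
  case: (rot_diagE lt_d12) => [[? [-> ->]] | [? [-> ->]]];
    case: (rot_diagE lt_e12) => [[? [-> ->]] | [? [-> ->]]]; lia_pairs.
Qed.

Lemma rot_diag_surj d' : is_diag d' -> exists2 d, is_diag d & rot_diag d = d'.
Proof.
move=> dd'; have := ltn_ord d'.2 => lt_d2n.
have lt_n1n : n.-1 < n by lia.
have lt_d2pn : (d'.2 : nat).-1 < n by lia.
have [d1_0|d1_pos] := eqVneq (d'.1 : nat) 0.
- pose d : 'I_n * 'I_n := (Ordinal lt_d2pn, Ordinal lt_n1n).
  have dd : is_diag d by move: dd'; rewrite /is_diag /=; lia.
  exists d => //; have lt_d12 := is_diag_ltn dd.
  apply: pair_val_inj; case: (rot_diagE lt_d12) => [[c [r1 r2]] | [c [r1 r2]]];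
    rewrite ?r1 ?r2; move: c dd'; rewrite /d /is_diag /=; lia_pairs.
- have lt_d1pn : (d'.1 : nat).-1 < n by have := ltn_ord d'.1; lia.
  pose d : 'I_n * 'I_n := (Ordinal lt_d1pn, Ordinal lt_d2pn).
  have dd : is_diag d by move: dd'; rewrite /is_diag /=; lia.
  exists d => //; have lt_d12 := is_diag_ltn dd.
  apply: pair_val_inj; case: (rot_diagE lt_d12) => [[c [r1 r2]] | [c [r1 r2]]];
    rewrite ?r1 ?r2; move: c dd'; rewrite /d /is_diag /=; lia_pairs.
Qed.

Lemma triangulation_rot T : triangulation T -> triangulation (rot_diag @: T).
Proof.
case/triangulationP => diagT noncross maxT; apply/triangulationP; split.
- by move=> _ /imsetP[d dT ->]; apply/rot_is_diag/diagT.
- move=> _ _ /imsetP[d dT ->] /imsetP[e eT ->].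
  by rewrite crossing_rot ?diagT //; apply: noncross.
- move=> d' dd' d'T; have [d dd rot_d] := rot_diag_surj dd'.
  have dT : d \notin T by apply: contra d'T => dT; rewrite -rot_d imset_f.
  have [e eT de] := maxT d dd dT; exists (rot_diag e); first exact: imset_f.
  by rewrite -rot_d crossing_rot // diagT.
Qed.

Lemma mem_rot T d : triangulation T -> is_diag d ->
  (rot_diag d \in rot_diag @: T) = (d \in T).
Proof.
case/triangulationP => diagT _ _ dd; apply/imsetP/idP => [[e eT de] | dT].
- by rewrite (rot_diag_inj dd (diagT e eT) de).
- by exists d.
Qed.

Lemma rot_triangulation_inj T T' : triangulation T -> triangulation T' ->
  rot_diag @: T = rot_diag @: T' -> T = T'.
Proof.
move=> triT triT' TT'; have [diagT _ _] := triangulationP _ triT.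
have [diagT' _ _] := triangulationP _ triT'.
apply/setP => d; apply/idP/idP => dT.
- by rewrite -(mem_rot triT') ?diagT // -TT' imset_f.
- by rewrite -(mem_rot triT) ?diagT' // TT' imset_f.
Qed.

Lemma fan_free_rot m b T : triangulation T -> b < n ->
  fan_free m b T -> fan_free m (b.+1 %% n) (rot_diag @: T).
Proof.
move=> triT lt_bn /forallP fanT; have [diagT _ _] := triangulationP _ triT.
apply/forallP => k; apply: contraNN (fanT k) => /existsP[_ /andP[/imsetP[d dT ->] rot_d_fan]].
apply/existsP; exists d; rewrite dT /=; move: rot_d_fan.
have n_pos : 0 < n by lia.
set w := (b + (k + 2)) %% n; have lt_wn : w < n by rewrite ltn_pmod.
have -> : (b.+1 %% n + (k + 2)) %% n = w.+1 %% n.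
  by rewrite /w modnDml -[(_ %% n).+1]addn1 modnDml; congr (_ %% _); lia.
have lt_d12 := is_diag_ltn (diagT d dT).
rewrite !modnS_small //; have := ltn_ord d.2.
by case: (rot_diagE lt_d12) => [[? [-> ->]] | [? [-> ->]]];
  repeat case: ifP => [/eqP ?|/negbT ?]; lia_pairs.
Qed.

Definition count_fan_free m b := #|[set T | triangulation T && fan_free m b T]|.

Lemma count_fan_free_rot m b : b < n ->
  count_fan_free m b <= count_fan_free m (b.+1 %% n).
Proof.
move=> lt_bn; rewrite /count_fan_free; set A := [set T | _].
have rot_inj : {in A &, injective (fun T => rot_diag @: T)}.
  by move=> T T'; rewrite !inE => /andP[triT _] /andP[triT' _]; apply: rot_triangulation_inj.
rewrite -(card_in_imset rot_inj); apply/subset_leq_card/subsetP.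
move=> _ /imsetP[T + ->]; rewrite !inE => /andP[triT fanT].
by rewrite triangulation_rot // fan_free_rot.
Qed.

Lemma count_fan_free_rotn m b j : 0 < n -> b < n ->
  count_fan_free m b <= count_fan_free m ((b + j) %% n).
Proof.
move=> n_pos lt_bn; elim: j => [|j IHj]; first by rewrite addn0 modn_small.
apply: (leq_trans IHj); apply: (leq_trans (count_fan_free_rot m (ltn_pmod _ n_pos))).
by rewrite -[((b + j) %% n).+1]addn1 modnDml addn1 addnS.
Qed.

(* Rotating all the way around gives a cycle of inequalities, hence equality. *)
Lemma count_fan_free_last m (a : 'I_n) : count_fan_free m a = count_fan_free m n.-1.
Proof.
have := ltn_ord a => lt_an; have n_pos : 0 < n by lia.
apply/eqP; rewrite eqn_leq; apply/andP; split.
- have := count_fan_free_rotn m (n.-1 - a) n_pos lt_an.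
  by rewrite (_ : a + (n.-1 - a) = n.-1) ?modn_small //; lia.
- have := count_fan_free_rotn m a.+1 n_pos (_ : n.-1 < n).
  by rewrite (_ : n.-1 + a.+1 = a + n) ?modnDr ?modn_small //; lia.
Qed.

End Polygon.

Theorem lemma3p4 (n : nat) (a : 'I_n) (m : nat) :
  4 <= n -> m <= n - 3 ->
  #|[set T : {set 'I_n * 'I_n} | triangulation T &&
       [forall k : 'I_m, ~~ has_diag T a ((a + (k + 2)) %% n)]]|
  = \sum_(i < (n - 3 - m).+1) catalan i * catalan (n - 3 - i).
Proof.
move=> le4n le_mn.
rewrite -[LHS]/(count_fan_free n m a) count_fan_free_last.
exact: card_fan_free_last.
Qed.
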